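(* Let $n\ge1$ and $s\ge0$ be integers such that $\lambda=3^{(n+s-1)/2}$ is an integer. Let $D_0,D_1,D_2$ be a partition of $\mathbb{F}_{3^n}$ such that each $D_i$ is a partial geometric difference set in the additive group of $\mathbb{F}_{3^n}$ and $\chi_a(D_i)\in\{0,\pm\lambda,\pm\lambda\zeta_3,\pm\lambda\zeta_3^2\}$ for every $a\in\mathbb{F}_{3^n}^*$ and $i=0,1,2$. Suppose one of the following holds: (1) $|D_0|=|D_1|=|D_2|$; (2) for some ordering $\{i,j,k\}=\{0,1,2\}$, $|D_i|=|D_j|=3^{n-1}-3^{(n+s-2)/2}$ and $|D_k|=3^{n-1}+2\cdot3^{(n+s-2)/2}$; (3) for some ordering $\{i,j,k\}=\{0,1,2\}$, $|D_i|=|D_j|=3^{n-1}+3^{(n+s-2)/2}$ and $|D_k|=3^{n-1}-2\cdot3^{(n+s-2)/2}$. Suppose further that $|\langle z_a,e\rangle|^2\in\{0,3\lambda^2\}$ for every $a\in\mathbb{F}_{3^n}^*$. Then the function $f:\mathbb{F}_{3^n}\to\mathbb{F}_3$ defined by $f(x)=i$ for $x\in D_i$ is $s$-plateaued.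
   Context: $\zeta_3=e^{2\pi i/3}$, $Tr_n(z)=\sum_{i=0}^{n-1}z^{3^i}$. For $a\in\mathbb{F}_{3^n}$, $\chi_a$ is the additive character $\chi_a(x)=\zeta_3^{Tr_n(ax)}$, and $\chi_a(S)=\sum_{x\in S}\chi_a(x)$. $z_a=(\chi_a(D_0),\chi_a(D_1),\chi_a(D_2))\in\mathbb{C}^3$, $e=(1,\zeta_3,\zeta_3^2)$, and $\langle u,w\rangle=\sum_i u_i\overline{w_i}$ is the complex inner product. Partial geometric difference set: $S\subseteq G$ ($G$ abelian of order $v$, $|S|=k$, $v>k>2$) such that, with $\delta(g)=|\{(s,t)\in S\times S:g=s-t\}|$, $\sum_{y\in S}\delta(x-y)$ equals a constant $\alpha$ for $x\notin S$ and a constant $\beta$ for $x\in S$. A function $f:\mathbb{F}_{3^n}\to\mathbb{F}_3$ is $s$-plateaued if $|\widehat f(\mu)|\in\{0,3^{(n+s)/2}\}$ for all $\mu$, where $\widehat f(\mu)=\sum_{x}\zeta_3^{f(x)-Tr_n(\mu x)}$. *)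

From HB Require Import structures.
From mathcomp Require Import all_boot all_order all_algebra all_field.
From mathcomp Require Import algC.
Set Implicit Arguments. Unset Strict Implicit. Unset Printing Implicit Defensive.
Import Order.TTheory GRing.Theory Num.Theory.
Local Open Scope ring_scope.

(* zeta_3 = e^{2 pi i/3} = (-1 + i sqrt 3)/2 in the algebraic complex numbers *)
Definition zeta3 : algC := (-1 + sqrtC (-3)) / 2.

Definition pg_delta (G : finZmodType) (S : {set G}) (g : G) : nat :=
  #|[set p : G * G | [&& p.1 \in S, p.2 \in S & g == p.1 - p.2]]|.

Definition partial_geometric_ds (G : finZmodType) (S : {set G}) : Prop :=
  (2 < #|S|)%N /\ (#|S| < #|G|)%N /\
  exists alpha beta : nat, forall x : G,
    (\sum_(y in S) pg_delta S (x - y)%R)%N = (if x \in S then beta else alpha).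

Definition trn (F : finFieldType) (n : nat) (z : F) : F :=
  \sum_(i < n) z ^+ (3 ^ i).

(* identify an element of the prime field {0,1,2} of F with its exponent *)
Definition f3exp (F : finFieldType) (t : F) : nat :=
  if t == 0 then 0%N else if t == 1 then 1%N else 2%N.

Definition chi (F : finFieldType) (n : nat) (a x : F) : algC :=
  zeta3 ^+ f3exp (trn n (a * x)).

Definition chiS (F : finFieldType) (n : nat) (a : F) (S : {set F}) : algC :=
  \sum_(x in S) chi n a x.

Definition za_dot_e (F : finFieldType) (n : nat) (D : 'I_3 -> {set F}) (a : F)
  : algC := \sum_(i < 3) chiS n a (D i) * (zeta3 ^+ i)^*.

Definition fD (F : finFieldType) (D : 'I_3 -> {set F}) (x : F) : 'I_3 :=
  odflt ord0 [pick i | x \in D i].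

Definition walsh (F : finFieldType) (n : nat) (f : F -> 'I_3) (mu : F) : algC :=
  \sum_(x : F) zeta3 ^+ (f x) * (zeta3 ^+ f3exp (trn n (mu * x)))^-1.

Definition plateaued (F : finFieldType) (n s : nat) (f : F -> 'I_3) : Prop :=
  forall mu : F, `|walsh n f mu| = 0 \/ `|walsh n f mu| = sqrtC (3 ^ (n + s))%:R.

From HB Require Import structures.
From mathcomp Require Import all_boot all_order all_algebra all_field.
From mathcomp Require Import algC.
From mathcomp Require Import ring.
Set Implicit Arguments. Unset Strict Implicit. Unset Printing Implicit Defensive.
Import Order.TTheory GRing.Theory Num.Theory.
Local Open Scope ring_scope.

(* Since f takes the value i exactly on D_i, the Walsh transform of f at mu is
   the complex conjugate of <z_mu, e>.  For mu <> 0 the hypothesis on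
   |<z_a, e>|^2 gives |hat f(mu)| in {0, sqrt(3 lambda^2)} = {0, 3^((n+s)/2)}.
   For mu = 0, chi_0(D_i) = |D_i| and <z_0, e> = sum_i |D_i| zeta3^-i; as
   1 + zeta3 + zeta3^2 = 0, a common shift of the three cardinalities does not
   change this sum, so it vanishes in case (1) and has modulus 3 c = 3^((n+s)/2)
   in cases (2) and (3).  The partial geometric and character-value hypotheses
   are not needed. *)

Lemma zeta3_sum : 1 + zeta3 + zeta3 ^+ 2 = 0.
Proof.
rewrite /zeta3; set r := sqrtC (-3 : algC).
have r2 : r ^+ 2 = -3 by rewrite sqrtCK.
have four_neq0 : (4 : algC) != 0 by rewrite pnatr_eq0.
have -> : 1 + (-1 + r) / 2 + ((-1 + r) / 2) ^+ 2 = (3 + r ^+ 2) / 4 by field.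
by rewrite r2 addrN mul0r.
Qed.

Lemma zeta3_cube : zeta3 ^+ 3 = 1.
Proof.
apply/eqP; rewrite -subr_eq0.
have -> : zeta3 ^+ 3 - 1 = (zeta3 - 1) * (1 + zeta3 + zeta3 ^+ 2) by ring.
by rewrite zeta3_sum mulr0.
Qed.

Lemma norm_zeta3X m : `|zeta3 ^+ m| = 1.
Proof.
suff norm_zeta3 : `|zeta3| = 1 by rewrite normrX norm_zeta3 expr1n.
by apply/eqP; rewrite -(pexpr_eq1 (n := 3)) // -normrX zeta3_cube normr1.
Qed.

Lemma invC_zeta3X m : (zeta3 ^+ m)^-1 = (zeta3 ^+ m)^*.
Proof. by rewrite invC_norm norm_zeta3X expr1n invr1 mul1r. Qed.

Lemma sum_zeta3X : \sum_(l < 3) zeta3 ^+ l = 0.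
Proof. by rewrite !big_ord_recr big_ord0 /= add0r expr0 expr1 zeta3_sum. Qed.

Lemma ord3_cases (l : 'I_3) : [\/ l = ord0, l = inord 1 | l = inord 2].
Proof.
by case: l => [[|[|[|//]]] ?]; [apply: Or31 | apply: Or32 | apply: Or33];
  apply: val_inj; rewrite /= ?inordK.
Qed.

Lemma ord3_third (l i j k : 'I_3) : [&& i != j, j != k & i != k] ->
  (l != i) && (l != j) = (l == k).
Proof.
by case: i => [[|[|[|//]]] ?]; case: j => [[|[|[|//]]] ?];
  case: k => [[|[|[|//]]] ?]; case: l => [[|[|[|//]]] ?].
Qed.

Lemma big_ord3_distinct (V : nmodType) (g : 'I_3 -> V) (i j k : 'I_3) :
  [&& i != j, j != k & i != k] -> \sum_(l < 3) g l = g i + g j + g k.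
Proof.
move=> ijk; rewrite (bigD1 i) //= (bigD1 j) /=; last first.
  by case/and3P: ijk; rewrite eq_sym.
by rewrite (eq_bigl (pred1 k)) ?big_pred1_eq ?addrA // => l; exact: ord3_third.
Qed.

Lemma norm_sum_zeta3X_shift (w : 'I_3 -> algC) (i j k : 'I_3) (A t : algC) :
  [&& i != j, j != k & i != k] ->
  w i = A + t -> w j = A + t -> w k = A - 2 * t ->
  `|\sum_(l < 3) w l * zeta3 ^+ l| = `|3 * t|.
Proof.
move=> ijk wi wj wk; have := sum_zeta3X.
rewrite !(big_ord3_distinct _ ijk) wi wj wk => zeta3_ijk.
have -> : (A + t) * zeta3 ^+ i + (A + t) * zeta3 ^+ j + (A - 2 * t) * zeta3 ^+ k
    = (A + t) * (zeta3 ^+ i + zeta3 ^+ j + zeta3 ^+ k) - 3 * t * zeta3 ^+ k.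
  by ring.
by rewrite zeta3_ijk mulr0 add0r normrN normrM norm_zeta3X mulr1.
Qed.

Lemma expn_odd_half b m : odd m -> (b * (b ^ m.-1./2) ^ 2 = b ^ m)%N.
Proof.
move=> odd_m; rewrite -expnM -expnS; congr (b ^ _)%N.
by rewrite -(odd_double_half m) odd_m add1n /= doubleK muln2.
Qed.

Section Partition.

Variables (F : finFieldType) (n : nat) (D : 'I_3 -> {set F}).
Hypothesis cover : forall x : F, exists i : 'I_3, x \in D i.
Hypothesis disjoint_D : forall i j : 'I_3, i != j -> [disjoint D i & D j].

Lemma fD_eq x i : (fD D x == i) = (x \in D i).
Proof.
rewrite /fD; case: pickP => [i0 x_i0 | no_i] /=.
  have [<- | ne] := eqVneq i0 i; first by rewrite x_i0.
  by rewrite (disjointFr (disjoint_D ne) x_i0); apply/negbTE.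
by have [j x_j] := cover x; move: (no_i j); rewrite x_j.
Qed.

Lemma walsh_fD mu : walsh n (fD D) mu = (za_dot_e n D mu)^*.
Proof.
rewrite /walsh /za_dot_e rmorph_sum (partition_big (fD D) xpredT) //=.
apply: eq_bigr => i _; rewrite rmorphM /= conjCK mulrC rmorph_sum mulr_sumr.
apply: eq_big => [x | x /eqP ->]; first by rewrite fD_eq.
by rewrite invC_zeta3X.
Qed.

End Partition.

Lemma trn0 (F : finFieldType) n : trn n (0 : F) = 0.
Proof. by apply: big1 => l _; rewrite expr0n expn_eq0. Qed.

Lemma chiS0 (F : finFieldType) n (S : {set F}) : chiS n 0 S = #|S|%:R.
Proof.
rewrite /chiS (eq_bigr (fun _ => 1)) ?sumr_const // => x _.
by rewrite /chi mul0r trn0 /f3exp eqxx.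
Qed.

Lemma za_dot_e0 (F : finFieldType) n (D : 'I_3 -> {set F}) :
  za_dot_e n D 0 = (\sum_(l < 3) #|D l|%:R * zeta3 ^+ l)^*.
Proof.
rewrite /za_dot_e rmorph_sum; apply: eq_bigr => l _.
by rewrite chiS0 rmorphM /= rmorph_nat.
Qed.

Theorem mainTheorem6 (F : finFieldType) (n s : nat) (D : 'I_3 -> {set F}) :
  (1 <= n)%N ->
  #|F| = (3 ^ n)%N ->
  (* lambda = 3^((n+s-1)/2) is an integer, i.e. n+s-1 is even *)
  odd (n + s) ->
  let lambda : algC := (3 ^ ((n + s).-1./2))%:R in
  let c : algC := sqrtC (3 ^ (n + s))%:R / 3 in   (* = 3^((n+s-2)/2) *)
  (* D_0, D_1, D_2 partition F *)
  (forall x : F, exists i : 'I_3, x \in D i) ->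
  (forall i j : 'I_3, i != j -> [disjoint D i & D j]) ->
  (forall i : 'I_3, partial_geometric_ds (D i)) ->
  (forall (a : F) (i : 'I_3), a != 0 ->
     chiS n a (D i) = 0 \/
     exists (j : 'I_3) (b : bool), chiS n a (D i) = (-1) ^+ b * lambda * zeta3 ^+ j) ->
  [\/ #|D ord0| = #|D (inord 1)| /\ #|D (inord 1)| = #|D (inord 2)|,
      exists i j k : 'I_3, [/\ [&& i != j, j != k & i != k],
        (#|D i|)%:R = (3 ^ n.-1)%:R - c :> algC,
        (#|D j|)%:R = (3 ^ n.-1)%:R - c :> algC &
        (#|D k|)%:R = (3 ^ n.-1)%:R + 2 * c :> algC]
    | exists i j k : 'I_3, [/\ [&& i != j, j != k & i != k],
        (#|D i|)%:R = (3 ^ n.-1)%:R + c :> algC,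
        (#|D j|)%:R = (3 ^ n.-1)%:R + c :> algC &
        (#|D k|)%:R = (3 ^ n.-1)%:R - 2 * c :> algC]] ->
  (forall a : F, a != 0 ->
     `|za_dot_e n D a| ^+ 2 = 0 \/ `|za_dot_e n D a| ^+ 2 = 3 * lambda ^+ 2) ->
  plateaued n s (fD D).
Proof.
move=> _ _ odd_ns lambda c cover disjoint_D _ _ card_D za_e mu.
rewrite walsh_fD // norm_conjC.
have [-> | mu_neq0] := eqVneq mu 0; last first.
  case: (za_e mu mu_neq0) => [/eqP | za_e_mu]; first by rewrite expf_eq0 => /eqP; left.
  by right; rewrite -[LHS]sqrCK // za_e_mu -natrX -natrM expn_odd_half.
have norm_3c : `|3 * c| = sqrtC (3 ^ (n + s))%:R.
  by rewrite mulrC divfK ?pnatr_eq0 // ger0_norm // sqrtC_ge0 ler0n.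
rewrite za_dot_e0 norm_conjC; case: card_D => [[D01 D12] | [i [j [k [ijk Di Dj Dk]]]] | [i [j [k [ijk Di Dj Dk]]]]].
- left; rewrite (eq_bigr (fun l : 'I_3 => #|D ord0|%:R * zeta3 ^+ l)).
    by rewrite -mulr_sumr sum_zeta3X mulr0 normr0.
  by move=> l _; case: (ord3_cases l) => ->; rewrite ?D01 ?D12.
- have Dk' : #|D k|%:R = (3 ^ n.-1)%:R - 2 * - c :> algC by rewrite mulrN opprK.
  by right; rewrite (norm_sum_zeta3X_shift (w := fun l => #|D l|%:R) ijk Di Dj Dk') mulrN normrN norm_3c.
- by right; rewrite (norm_sum_zeta3X_shift (w := fun l => #|D l|%:R) ijk Di Dj Dk) norm_3c.
Qed.
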